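(* If $\sum_{i=1}^M b_i<1$, then for every $\epsilon>0$ the energy-scarce solution $\mathbf r^\star$ is feasible for Problem 1, i.e. $r^\star_l>0$ and $\sigma_l(\mathbf r^\star)\le b_l$ for all $l$.
   Context: Fix an integer $M\ge1$, weights $w_1,\dots,w_M>0$, constants $b_1,\dots,b_M>0$, and $\epsilon>0$. For $\mathbf r\in(0,\infty)^M$ write $S(\mathbf r)=\sum_{i=1}^M r_i$ and define $$\sigma_l(\mathbf r)=\frac{(1-e^{-r_l\epsilon})S(\mathbf r)+r_le^{-r_l\epsilon}}{S(\mathbf r)+1}.$$ Problem 1's constraint set is $\{\mathbf r\in(0,\infty)^M:\sigma_l(\mathbf r)\le b_l\ \forall l\}$. Energy-scarce solution (when $B:=\sum_i b_i<1$): for each $l$ let $$c_l=\frac{2b_l(1-B)^2}{b_l(1-B)^2+\sqrt{b_l^2(1-B)^4+4b_l^2(1-B)^2(B-b_l)\epsilon}},$$ let $x^\star=\frac{\min_l c_l}{1-B}$, $\beta^\star=\sum_{i=1}^M \frac{1}{\sqrt{w_i}}$, and set $r^\star_l=\min\{b_l,\beta^\star\sqrt{w_l}\}\,x^\star$. *)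

(* real analysis (exp, sqrt). Indices l = 0..M-1 (paper: 1..M). *)
From Stdlib Require Import Reals Lra.
Open Scope R_scope.

Fixpoint sumM (M : nat) (f : nat -> R) : R :=
  match M with O => 0 | S k => sumM k f + f k end.

Fixpoint minM (M : nat) (f : nat -> R) : R :=
  match M with
  | O => f O
  | S O => f O
  | S k => Rmin (minM k f) (f k)
  end.

Definition S_tot (M : nat) (r : nat -> R) : R := sumM M r.

Definition sigma_l (M : nat) (eps : R) (r : nat -> R) (l : nat) : R :=
  ((1 - exp (- (r l * eps))) * S_tot M r + r l * exp (- (r l * eps)))
  / (S_tot M r + 1).

Definition c_l (M : nat) (b : nat -> R) (eps : R) (l : nat) : R :=
  let B := sumM M b in
  2 * b l * (1 - B)^2 /
  (b l * (1 - B)^2 +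
   sqrt (b l ^ 2 * (1 - B)^4 + 4 * b l ^ 2 * (1 - B)^2 * (B - b l) * eps)).

Definition x_star (M : nat) (b : nat -> R) (eps : R) : R :=
  minM M (c_l M b eps) / (1 - sumM M b).

Definition beta_star (M : nat) (w : nat -> R) : R :=
  sumM M (fun i => 1 / sqrt (w i)).

Definition r_star (M : nat) (w b : nat -> R) (eps : R) (l : nat) : R :=
  Rmin (b l) (beta_star M w * sqrt (w l)) * x_star M b eps.

From Stdlib Require Import Reals Lra Lia Psatz.
Open Scope R_scope.

(* Since B < 1, every b_l < 1 <= beta* sqrt(w_l), so r* = x* b is a scalar
   multiple of b and the total rate is S = x* B.  Using 1 - e^{-t} <= t,
   sigma_l(x b) <= b_l reduces to the quadratic condition
   (1 - B) x + eps (B - b_l) x^2 <= 1, and c_l is exactly the positive root of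
   (1 - B)^2 y + eps (B - b_l) y^2 = (1 - B)^2 in the variable y = (1 - B) x. *)

Lemma sumM_ext M f g :
  (forall i, (i < M)%nat -> f i = g i) -> sumM M f = sumM M g.
Proof.
  induction M as [|k IH]; intros H; simpl; [reflexivity|].
  rewrite IH, (H k); [reflexivity | lia | intros; apply H; lia].
Qed.

Lemma sumM_mulr M f x : sumM M (fun i => f i * x) = sumM M f * x.
Proof. induction M as [|k IH]; simpl; [|rewrite IH]; ring. Qed.

Lemma sumM_ge0 M f : (forall i, (i < M)%nat -> 0 <= f i) -> 0 <= sumM M f.
Proof.
  induction M as [|k IH]; intros H; simpl; [lra|].
  assert (0 <= sumM k f) by (apply IH; intros; apply H; lia).
  assert (0 <= f k) by (apply H; lia). lra.
Qed.

Lemma sumM_ge_term M f l :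
  (forall i, (i < M)%nat -> 0 <= f i) -> (l < M)%nat -> f l <= sumM M f.
Proof.
  induction M as [|k IH]; intros H Hl; simpl; [lia|].
  assert (0 <= sumM k f) by (apply sumM_ge0; intros; apply H; lia).
  destruct (Nat.eq_dec l k) as [->|Hne]; [lra|].
  assert (f l <= sumM k f) by (apply IH; [intros; apply H|]; lia).
  assert (0 <= f k) by (apply H; lia). lra.
Qed.

Lemma minM_le M f l : (l < M)%nat -> minM M f <= f l.
Proof.
  induction M as [|[|k] IH]; intros Hl; [lia| |].
  - replace l with O by lia. simpl. lra.
  - change (minM (S (S k)) f) with (Rmin (minM (S k) f) (f (S k))).
    destruct (Nat.eq_dec l (S k)) as [->|Hne]; [apply Rmin_r|].
    eapply Rle_trans; [apply Rmin_l | apply IH; lia].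
Qed.

Lemma minM_gt0 M f :
  (1 <= M)%nat -> (forall i, (i < M)%nat -> 0 < f i) -> 0 < minM M f.
Proof.
  induction M as [|[|k] IH]; intros HM H; [lia| simpl; apply H; lia |].
  change (minM (S (S k)) f) with (Rmin (minM (S k) f) (f (S k))).
  apply Rmin_pos; [apply IH; [lia | intros; apply H; lia] | apply H; lia].
Qed.

Lemma one_sub_exp_opp_le t : 1 - exp (- t) <= t.
Proof. pose proof (exp_ineq1_le (- t)). lra. Qed.

Section QuadraticRoot.

Variables p q : R.
Hypothesis p_gt0 : 0 < p.
Hypothesis q_ge0 : 0 <= q.

(* The positive root of q y^2 + p y - p = 0, written in the cancellation-free
   form 2p / (p + sqrt (p^2 + 4pq)). *)
Definition quadratic_root := 2 * p / (p + sqrt (p ^ 2 + 4 * p * q)).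

Let s := sqrt (p ^ 2 + 4 * p * q).

Let s_ge0 : 0 <= s.
Proof. apply sqrt_pos. Qed.

Let s_sq : s * s = p ^ 2 + 4 * p * q.
Proof. apply sqrt_sqrt. nra. Qed.

Lemma quadratic_root_gt0 : 0 < quadratic_root.
Proof. unfold quadratic_root. fold s. apply Rdiv_lt_0_compat; lra. Qed.

Lemma quadratic_root_eq :
  p * quadratic_root + q * quadratic_root ^ 2 = p.
Proof.
  unfold quadratic_root. fold s.
  field_simplify; [| lra].
  replace (s ^ 2) with (p ^ 2 + 4 * p * q) by (rewrite <- s_sq; ring).
  field. nra.
Qed.

Lemma below_quadratic_root y :
  0 <= y <= quadratic_root -> p * y + q * y ^ 2 <= p.
Proof.
  intros [y_ge0 y_le].
  pose proof quadratic_root_eq as root_eq. pose proof quadratic_root_gt0.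
  set (c := quadratic_root) in *.
  assert (q * y ^ 2 <= q * c ^ 2) by (apply Rmult_le_compat_l; nra).
  nra.
Qed.

End QuadraticRoot.

Lemma c_l_quadratic_root M b eps l :
  let B := sumM M b in
  c_l M b eps l =
  quadratic_root (b l * (1 - B) ^ 2) (b l * (B - b l) * eps).
Proof.
  intros B. unfold c_l, quadratic_root. fold B.
  replace (b l ^ 2 * (1 - B) ^ 4 + 4 * b l ^ 2 * (1 - B) ^ 2 * (B - b l) * eps)
    with ((b l * (1 - B) ^ 2) ^ 2 + 4 * (b l * (1 - B) ^ 2) * (b l * (B - b l) * eps))
    by ring.
  rewrite Rmult_assoc. reflexivity.
Qed.

Lemma c_l_gt0 M b eps l :
  let B := sumM M b in
  0 < b l -> B < 1 -> 0 < c_l M b eps l.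
Proof.
  intros B hb hB. rewrite c_l_quadratic_root. fold B.
  apply quadratic_root_gt0, Rmult_lt_0_compat; [exact hb | apply pow_lt; lra].
Qed.

Lemma below_c_l M b eps l x :
  let B := sumM M b in
  0 < b l -> b l <= B -> B < 1 -> 0 < eps -> 0 <= (1 - B) * x <= c_l M b eps l ->
  (1 - B) * x + eps * (B - b l) * x ^ 2 <= 1.
Proof.
  intros B hb hbB hB heps hy. rewrite c_l_quadratic_root in hy. fold B in hy.
  assert (hp : 0 < b l * (1 - B) ^ 2)
    by (apply Rmult_lt_0_compat; [|apply pow_lt]; lra).
  assert (hq : 0 <= b l * (B - b l) * eps)
    by (apply Rmult_le_pos; [apply Rmult_le_pos|]; lra).
  apply (below_quadratic_root _ _ hp hq) in hy.
  apply Rmult_le_reg_l with (b l * (1 - B) ^ 2); [exact hp | lra].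
Qed.

Lemma sigma_l_ext M eps r r' l :
  (forall i, (i < M)%nat -> r i = r' i) -> (l < M)%nat ->
  sigma_l M eps r l = sigma_l M eps r' l.
Proof.
  intros H hl. unfold sigma_l, S_tot. rewrite (sumM_ext M r r' H), (H l hl).
  reflexivity.
Qed.

Lemma sigma_l_scaled_le M eps b x l :
  let B := sumM M b in
  0 < eps -> 0 < x -> (forall i, (i < M)%nat -> 0 < b i) -> (l < M)%nat ->
  (1 - B) * x + eps * (B - b l) * x ^ 2 <= 1 ->
  sigma_l M eps (fun i => b i * x) l <= b l.
Proof.
  intros B heps hx hb hl hquad.
  assert (hbB : b l <= B) by (apply sumM_ge_term; [intros i hi; left; apply hb|]; auto).
  assert (hbl := hb l hl).
  unfold sigma_l, S_tot. rewrite sumM_mulr. fold B.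
  set (e := exp (- (b l * x * eps))).
  assert (he : 1 - e <= b l * x * eps) by apply one_sub_exp_opp_le.
  assert (hS : 0 <= B * x) by nra.
  (* (1 - e) B x + b_l x e = (1 - e)(B - b_l) x + b_l x *)
  assert (hnum : (1 - e) * ((B - b l) * x) <= b l * x * eps * ((B - b l) * x))
    by (apply Rmult_le_compat_r; nra).
  apply Rle_trans with (b l * (B * x + 1) / (B * x + 1)); [| right; field; lra].
  apply Rmult_le_compat_r; [left; apply Rinv_0_lt_compat; lra | nra].
Qed.

Lemma r_star_scaled M w b eps l :
  (forall i, (i < M)%nat -> 0 < w i) -> (forall i, (i < M)%nat -> 0 < b i) ->
  sumM M b < 1 -> (l < M)%nat ->
  r_star M w b eps l = b l * x_star M b eps.
Proof.
  intros hw hb hB hl. unfold r_star. rewrite Rmin_left; [reflexivity|].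
  assert (hsw : 0 < sqrt (w l)) by (apply sqrt_lt_R0, hw, hl).
  assert (hbeta : 1 / sqrt (w l) <= beta_star M w).
  { apply (sumM_ge_term M (fun i => 1 / sqrt (w i))); [| exact hl].
    intros i hi. left. apply Rdiv_lt_0_compat; [lra | apply sqrt_lt_R0, hw, hi]. }
  assert (hbl : b l <= sumM M b) by (apply sumM_ge_term; [intros i hi; left; apply hb|]; auto).
  assert (1 <= beta_star M w * sqrt (w l)).
  { replace 1 with (1 / sqrt (w l) * sqrt (w l)) by (field; lra).
    apply Rmult_le_compat_r; lra. }
  lra.
Qed.

Theorem lemma4 (M : nat) (w b : nat -> R) (eps : R)
  (hM : (1 <= M)%nat)
  (hw : forall i, (i < M)%nat -> 0 < w i)
  (hb : forall i, (i < M)%nat -> 0 < b i)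
  (heps : 0 < eps)
  (hB : sumM M b < 1) :
  forall l, (l < M)%nat ->
    0 < r_star M w b eps l /\
    sigma_l M eps (r_star M w b eps) l <= b l.
Proof.
  intros l hl.
  set (B := sumM M b) in *. set (x := x_star M b eps).
  assert (hbB : forall i, (i < M)%nat -> b i <= B)
    by (intros i hi; apply sumM_ge_term; [intros j hj; left; apply hb|]; auto).
  assert (hy : 0 < (1 - B) * x <= c_l M b eps l).
  { replace ((1 - B) * x) with (minM M (c_l M b eps))
      by (unfold x, x_star; fold B; field; lra).
    split; [apply minM_gt0; [exact hM|] | apply minM_le, hl].
    intros i hi. apply c_l_gt0; auto. }
  assert (hx : 0 < x) by nra.
  rewrite (r_star_scaled M w b eps l hw hb hB hl).
  split; [apply Rmult_lt_0_compat; [apply hb, hl | exact hx] |].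
  rewrite (sigma_l_ext M eps _ (fun i => b i * x) l) by (auto using r_star_scaled).
  apply sigma_l_scaled_le, below_c_l; auto.
  fold B. lra.
Qed.
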